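(* Let $G=(V,E_1,\dots,E_k)$ be a complete edge-colored graph. Then the following statements are equivalent: (i) $G$ is a complete edge-colored permutation graph, i.e., there exists a labeling $\ell$ of $G$ such that for each monochromatic subgraph $G_{|i}$ of $G$, $(G_{|i},\ell)$ is a simple permutation graph. (ii) Each induced subgraph of $G$ is a complete edge-colored permutation graph. (iii) For each strong module $M$ of $G$, the quotient graph $G[M]/\mathbb{P}_{\max}(M)$ is a complete edge-colored permutation graph. (iv) For each strong prime module $M$ of $G$, the quotient graph $G[M]/\mathbb{P}_{\max}(M)$ is a complete edge-colored permutation graph; in particular, the quotient graph of each strong prime module on at least three vertices is $2$-edge-colored. (v) Each monochromatic subgraph $G_{|i}$ of $G$, together with some labeling (possibly depending on $i$ and different from the one in (i)), is a simple permutation graph, and $G$ does not contain a rainbow triangle.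
   Context: All graphs are finite, simple and undirected; $[n]=\{1,\dots,n\}$. A permutation of length $n$ is a bijection $\pi:[n]\to[n]$. A labeling of a graph with vertex set $V$ is a bijection $\ell:V\to[|V|]$. A graph $H=(V,E)$ together with a labeling $\ell$ is a (simple) permutation graph of a permutation $\pi$ of length $|V|$ if for all $u,v\in V$ with $\ell(u)>\ell(v)$: $\{u,v\}\in E$ iff $\pi^{-1}(\ell(u))<\pi^{-1}(\ell(v))$; $H$ is a simple permutation graph if such $\ell,\pi$ exist. A complete $k$-edge-colored graph $G=(V,E_1,\dots,E_k)$ is the complete graph on $V$ whose edge set is partitioned into $k$ nonempty color classes $E_1,\dots,E_k$ (edge $e\in E_i$ has color $i$); the one-vertex graph is also regarded as a complete edge-colored graph. The $i$-th monochromatic subgraph is $G_{|i}=(V,E_i)$. Induced subgraphs keep the colors of their edges (and may use fewer colors). $G$ is a complete edge-colored permutation graph if there are a labeling $\ell$ and permutations $\pi_1,\dots,\pi_k$ such that $(G_{|i},\ell)$ is a simple permutation graph of $\pi_i$ for each $i$. A rainbow triangle is a set of three vertices whose three edges have pairwise distinct colors. A module of $G$ is a set $M\subseteq V$ such that for every $v\in V\setminus M$ all edges $\{u,v\}$ with $u\in M$ have the same color. A strong module is a nonempty module $M$ such that every module $M'$ satisfies $M\subseteq M'$, $M'\subseteq M$ or $M\cap M'=\emptyset$. For a strong module $M$ with $|M|\ge 2$, $\mathbb{P}_{\max}(M)$ is the set of inclusion-maximal strong modules properly contained in $M$ (it partitions $M$); the quotient graph $G[M]/\mathbb{P}_{\max}(M)$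 is the complete graph on vertex set $\mathbb{P}_{\max}(M)$ in which the edge $\{M_a,M_b\}$ gets the (common) color of all edges $\{u,v\}$ with $u\in M_a$, $v\in M_b$. For $|M|=1$ the quotient graph is the one-vertex graph. A strong module $M$ is series if its quotient graph has at least two vertices and all its edges have the same color, and prime otherwise. *)

From mathcomp Require Import all_boot all_fingroup.
Set Implicit Arguments. Unset Strict Implicit. Unset Printing Implicit Defensive.

Section Defs.
Variable T : finType.
(* A complete edge-colored graph on vertex set T: each unordered pair {u,v},
   u <> v, gets the colour c u v (a natural number); c is symmetric.
   Values on the diagonal are irrelevant. The colours of G are the colours
   actually used by some edge. *)
Variable c : T -> T -> nat.

Definition color_used (S : {set T}) (i : nat) : Prop :=
  exists u v, [/\ u \in S, v \in S, u != v & c u v = i].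

Definition ncolors (S : {set T}) : nat :=
  size (undup [seq c p.1 p.2 | p <- [seq p <- enum (setX S S) | p.1 != p.2]]).

Definition labeling (S : {set T}) (l : T -> 'I_#|S|) : Prop :=
  {in S &, injective l}.

Definition perm_graph_of (S : {set T}) (e : rel T) (l : T -> 'I_#|S|)
  (pi : {perm 'I_#|S|}) : Prop :=
  forall u v, u \in S -> v \in S -> l v < l u ->
    e u v = ((pi^-1)%g (l u) < (pi^-1)%g (l v)).

Definition simple_perm_graph (S : {set T}) (e : rel T) : Prop :=
  exists l, labeling l /\ exists pi, @perm_graph_of S e l pi.

Definition mono (i : nat) : rel T := fun u v => (u != v) && (c u v == i).

Definition ecpg (S : {set T}) : Prop :=
  exists l, labeling l /\
    forall i, color_used S i -> exists pi, @perm_graph_of S (mono i) l pi.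

Definition rainbow_triangle : Prop :=
  exists u v w : T, [/\ u != v, v != w, u != w &
    [/\ c u v != c v w, c v w != c u w & c u v != c u w]].

Definition module (M : {set T}) : bool :=
  [forall v in ~: M, forall u in M, forall u' in M, c u v == c u' v].

Definition strong_module (M : {set T}) : bool :=
  (M != set0) && module M &&
  [forall M' : {set T}, module M' ==>
     [|| M \subset M', M' \subset M | [disjoint M & M']]].

Definition Pmax (M : {set T}) : {set {set T}} :=
  [set N | [&& strong_module N, N \proper M &
     [forall N' : {set T}, [&& strong_module N', N' \proper M & N \subset N']
        ==> (N' == N)]]].

Definition qverts (M : {set T}) : {set {set T}} :=
  if #|M| == 1 then [set M] else Pmax M.

End Defs.

Definition qcol (T : finType) (c : T -> T -> nat) (A B : {set T}) : nat :=
  match [pick x in A], [pick y in B] with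
  | Some x, Some y => c x y
  | _, _ => 0
  end.

Definition series_module (T : finType) (c : T -> T -> nat) (M : {set T}) : bool :=
  strong_module c M && (2 <= #|qverts c M|) &&
  [forall A in qverts c M, forall B in qverts c M, forall A' in qverts c M,
     forall B' in qverts c M,
       (A != B) ==> (A' != B') ==> (qcol c A B == qcol c A' B')].

Definition prime_module (T : finType) (c : T -> T -> nat) (M : {set T}) : bool :=
  strong_module c M && ~~ series_module c M.

From mathcomp Require Import all_boot all_fingroup zify.
From Stdlib Require Import Classical ClassicalEpsilon.
Set Implicit Arguments. Unset Strict Implicit. Unset Printing Implicit Defensive.

(* A labeling serves all colours at once iff the linear order it induces is
   umbrella-free: for u < v < w the colour of uw is that of uv or of vw; the
   permutation of colour i is then the order in which the colour-i edges are
   exactly the inversions.  Umbrella-freeness passes to subsets and to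
   quotients, and umbrella-free orders of the maximal strong submodules and of
   the quotient combine lexicographically, which gives (i) <-> (ii) <-> (iii).
   Series quotients are monochromatic, so (iv) -> (iii), and an umbrella-free
   order has no rainbow triangle, so (i) -> (v).  Conversely, without rainbow
   triangles Gallai's argument shows that the quotient of a prime module, being
   primitive, uses only two colours; the permutation graph of one of them, read
   off at representatives, is then umbrella-free, so (v) -> (iv). *)

Section OrderRank.
Variables (X : finType) (S : {set X}) (r : rel X).
Hypotheses (r_irr : {in S, irreflexive r}) (r_trans : {in S & &, transitive r}).

Definition order_rank x := #|[set y in S | r y x]|.

Lemma order_rank_lt x y : x \in S -> y \in S -> r x y -> order_rank x < order_rank y.
Proof.
move=> xS yS rxy; apply: proper_card; apply/properP; split.
  by apply/subsetP=> z; rewrite !inE => /andP[zS rzx]; rewrite zS (r_trans xS zS yS rzx rxy).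
by exists x; rewrite !inE xS ?rxy ?r_irr.
Qed.

Lemma order_rank_bound x : x \in S -> order_rank x < #|S|.
Proof.
move=> xS; apply: proper_card; apply/properP; split.
  by apply/subsetP=> z; rewrite inE => /andP[].
by exists x; rewrite // inE r_irr ?andbF.
Qed.

Hypothesis r_total : {in S &, forall x y, x != y -> r x y || r y x}.

Lemma order_rank_ltE x y : x \in S -> y \in S -> (order_rank x < order_rank y) = r x y.
Proof.
move=> xS yS; apply/idP/idP; last exact: order_rank_lt.
have [<-|neq_xy] := eqVneq x y; first by rewrite ltnn.
case/orP: (r_total xS yS neq_xy) => // ryx.
move=> lt_xy; have := order_rank_lt yS xS ryx.
by rewrite ltnNge (ltnW lt_xy).
Qed.

Lemma order_rank_inj : {in S &, injective order_rank}.
Proof.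
move=> x y xS yS eq_xy; apply/eqP; apply: contraT => neq_xy.
by case/orP: (r_total xS yS neq_xy) => /order_rank_lt; rewrite eq_xy ltnn; apply.
Qed.

Lemma perm_of_order (l : X -> 'I_#|S|) : {in S &, injective l} ->
  exists pi : {perm 'I_#|S|},
    {in S &, forall u v, r u v = ((pi^-1)%g (l u) < (pi^-1)%g (l v))}.
Proof.
move=> l_inj.
have l_onto k : exists2 x, x \in S & l x = k.
  have: k \in l @: S.
    suff ->: l @: S = setT by rewrite inE.
    by apply/eqP; rewrite eqEcard subsetT cardsT card_ord (card_in_imset l_inj) leqnn.
  by case/imsetP=> x xS ->; exists x.
pose g k : 'I_#|S| :=
  if [pick x in S | l x == k] is Some x then insubd k (order_rank x) else k.
have gE x : x \in S -> val (g (l x)) = order_rank x.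
  move=> xS; rewrite /g; case: pickP => [y /andP[yS /eqP /l_inj->//]|/(_ x)].
    by rewrite val_insubd order_rank_bound.
  by rewrite xS eqxx.
have g_inj : injective g.
  move=> k1 k2; have [x1 x1S <-] := l_onto k1; have [x2 x2S <-] := l_onto k2.
  by move/(congr1 val); rewrite !gE // => /order_rank_inj->.
exists (perm g_inj)^-1%g => u v uS vS.
by rewrite invgK !permE -order_rank_ltE // -!gE.
Qed.

End OrderRank.

Section UmbrellaFree.
Variables (X : finType) (col : X -> X -> nat).
Hypothesis col_sym : forall u v, col u v = col v u.
Implicit Types (S : {set X}) (f : X -> nat).

Definition umbrella_free S f :=
  {in S &, injective f} /\
  {in S & &, forall u v w, f u < f v -> f v < f w ->
    col u w = col u v \/ col u w = col v w}.

Lemma umbrella_freeS S S' f : S' \subset S -> umbrella_free S f -> umbrella_free S' f.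
Proof.
move=> /subsetP sS'S [f_inj f_umb]; split=> [x y xS yS|u v w uS vS wS].
  by apply: f_inj; apply: sS'S.
by apply: f_umb; apply: sS'S.
Qed.

Lemma eq_umbrella_free S f g : {in S, f =1 g} -> umbrella_free S f -> umbrella_free S g.
Proof.
move=> fg [f_inj f_umb]; split=> [x y xS yS|u v w uS vS wS].
  by rewrite -!fg //; apply: f_inj.
by rewrite -!fg //; apply: f_umb.
Qed.

Lemma umbrella_free_bounded S f : umbrella_free S f ->
  exists2 g, umbrella_free S g & {in S, forall x, g x < #|S|}.
Proof.
case=> f_inj f_umb; pose r := [rel x y | f x < f y].
have r_irr : {in S, irreflexive r} by move=> x _; apply: ltnn.
have r_trans : {in S & &, transitive r} by move=> y x z _ _ _; apply: ltn_trans.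
have r_total : {in S &, forall x y, x != y -> r x y || r y x}.
  by move=> x y xS yS neq_xy; rewrite -neq_ltn; apply: contra neq_xy => /eqP/f_inj->.
exists (order_rank S r); last by move=> x; apply: order_rank_bound.
split=> [|u v w uS vS wS]; first exact: order_rank_inj.
by rewrite !order_rank_ltE //; apply: f_umb.
Qed.

Section Orientation.
Variables (S : {set X}) (f : X -> nat) (i : nat).
Hypothesis f_uf : umbrella_free S f.

(* The order of colour [i]'s permutation: colour-[i] edges are the inversions of [f]. *)
Definition orient x y := (x != y) && ((f x < f y) (+) (col x y == i)).

Lemma orientC x y : x \in S -> y \in S -> x != y -> orient y x = ~~ orient x y.
Proof.
move=> xS yS neq_xy; rewrite /orient neq_xy eq_sym neq_xy col_sym /=.
have /negbTE neq_f : f x != f y by apply: contra neq_xy => /eqP/f_uf.1->.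
by case: ltngtP neq_f => //= _ _; rewrite negbK.
Qed.

Lemma umbrella_free_color x y z : x \in S -> y \in S -> z \in S ->
  f x < f y -> f y < f z ->
  ((col x z == i) ==> (col x y == i) || (col y z == i)) &&
  ((col x y == i) && (col y z == i) ==> (col x z == i)).
Proof.
move=> xS yS zS lt_xy lt_yz.
by case: (f_uf.2 x y z xS yS zS lt_xy lt_yz) => ->; case: (_ == i); case: (_ == i).
Qed.

Lemma orient_no_cycle :
  {in S & &, forall x y z, ~~ [&& orient x y, orient y z & orient z x]}.
Proof.
have min_no_cycle x y z : x \in S -> y \in S -> z \in S -> f x < f y -> f x < f z ->
    ~~ [&& orient x y, orient y z & orient z x].
  move=> xS yS zS lt_xy lt_xz; rewrite /orient lt_xy (ltnNge (f z)) (ltnW lt_xz) /=.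
  rewrite (col_sym z x).
  case: (ltngtP (f y) (f z)) => [lt_yz|lt_zy|eq_yz] /=.
  - move: (umbrella_free_color xS yS zS lt_xy lt_yz).
    by case: (_ == i); case: (_ == i); case: (_ == i); rewrite //= ?andbF.
  - move: (umbrella_free_color xS zS yS lt_xz lt_zy); rewrite (col_sym z y).
    by case: (_ == i); case: (_ == i); case: (_ == i); rewrite //= ?andbF.
  - by rewrite (f_uf.1 y z yS zS eq_yz) eqxx !andbF.
move=> x y z xS yS zS; apply/negP=> cycle.
have [/andP[nxy _] /andP[nyz _] /andP[nzx _]] := and3P cycle.
have neq_f a b : a \in S -> b \in S -> a != b -> f a != f b.
  by move=> aS bS; apply: contra => /eqP/f_uf.1->.
have := neq_f _ _ xS yS nxy; have := neq_f _ _ yS zS nyz; have := neq_f _ _ zS xS nzx.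
move=> fzx fyz fxy.
have [[lt_xy lt_xz]|[[lt_yz lt_yx]|[lt_zx lt_zy]]] :
  (f x < f y /\ f x < f z) \/ (f y < f z /\ f y < f x) \/ (f z < f x /\ f z < f y) by lia.
- by move: cycle; apply/negP; apply: min_no_cycle.
- by move: cycle; rewrite andbC -andbA; apply/negP; apply: min_no_cycle.
- by move: cycle; rewrite andbA andbC; apply/negP; apply: min_no_cycle.
Qed.

Lemma orient_trans : {in S & &, transitive orient}.
Proof.
move=> y x z yS xS zS oxy oyz; apply: contraT => not_oxz.
have nxy : x != y by case/andP: oxy.
have nxz : x != z by apply: contraTneq oyz => <-; rewrite orientC // oxy.
have ozx : orient z x by rewrite orientC.
by have := orient_no_cycle xS yS zS; rewrite oxy oyz ozx.
Qed.

End Orientation.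

Definition rainbow_free S :=
  {in S & &, forall u v w, u != v -> v != w -> u != w ->
     col u v = col v w \/ col v w = col u w \/ col u v = col u w}.

Lemma umbrella_free_rainbow_free S f : umbrella_free S f -> rainbow_free S.
Proof.
case=> f_inj f_umb u v w uS vS wS uv vw uw.
have neq_f x y : x \in S -> y \in S -> x != y -> f x != f y.
  by move=> xS yS; apply: contra => /eqP/f_inj->.
have := neq_f _ _ uS vS uv; have := neq_f _ _ vS wS vw; have := neq_f _ _ uS wS uw.
move: (f_umb u v w uS vS wS) (f_umb u w v uS wS vS) (f_umb v u w vS uS wS)
      (f_umb v w u vS wS uS) (f_umb w u v wS uS vS) (f_umb w v u wS vS uS).
rewrite (col_sym v u) (col_sym w u) (col_sym w v); lia.
Qed.

Lemma umbrella_free_ecpg S f : 0 < #|S| -> umbrella_free S f -> ecpg col S.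
Proof.
move=> S_gt0 /umbrella_free_bounded[g g_uf g_lt].
pose l x : 'I_#|S| := insubd (Ordinal S_gt0) (g x).
have l_uf : umbrella_free S (fun x => val (l x)).
  by apply: eq_umbrella_free g_uf => x xS; rewrite val_insubd g_lt.
have l_inj : {in S &, injective l}.
  by move=> x y xS yS /(congr1 val); apply: l_uf.1.
exists l; split=> // i _.
have irr : {in S, irreflexive (orient (fun x => val (l x)) i)}.
  by move=> x _; rewrite /orient eqxx.
have total : {in S &, forall x y, x != y ->
    orient (fun x => val (l x)) i x y || orient (fun x => val (l x)) i y x}.
  by move=> x y xS yS nxy; rewrite (orientC i l_uf xS yS nxy) orbN.
have [pi Hpi] := perm_of_order irr (orient_trans l_uf) total l_inj.
exists pi => u v uS vS lt_vu.
by rewrite -Hpi // /orient /mono ltnNge (ltnW lt_vu).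
Qed.

Lemma ecpg_umbrella_free S : ecpg col S -> exists f, umbrella_free S f.
Proof.
case=> l [l_inj perm_l]; exists (fun x => val (l x)); split.
  by move=> x y xS yS /val_inj; apply: l_inj.
move=> u v w uS vS wS lt_uv lt_vw.
have nuw : u != w by apply: contraTneq (ltn_trans lt_uv lt_vw) => ->; rewrite ltnn.
have [pi pi_l] : exists pi, perm_graph_of (mono col (col u w)) l pi.
  by apply: perm_l; exists u, w.
have [->|ne_uv] := eqVneq (col u v) (col u w); first by left.
have [->|ne_vw] := eqVneq (col v w) (col u w); first by right.
move: (pi_l w u wS uS (ltn_trans lt_uv lt_vw)) (pi_l v u vS uS lt_uv).
move: (pi_l w v wS vS lt_vw); rewrite /mono (eq_sym w u) nuw (col_sym w u) (col_sym v u).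
rewrite (col_sym w v) eqxx (negbTE ne_uv) (negbTE ne_vw) !andbF /=.
by move=> ewv evu ewu; lia.
Qed.

Lemma ecpgS S S' : S' \subset S -> 0 < #|S'| -> ecpg col S -> ecpg col S'.
Proof.
move=> sS'S S'_gt0 /ecpg_umbrella_free[f f_uf].
by apply: (umbrella_free_ecpg S'_gt0 (f := f)); apply: umbrella_freeS f_uf.
Qed.

Lemma ecpg_simple_perm_graph S i : ecpg col S -> color_used col S i ->
  simple_perm_graph S (mono col i).
Proof. by case=> l [l_inj l_perm] i_used; exists l; split=> //; apply: l_perm. Qed.

Lemma ecpg_rainbow_free S : ecpg col S -> rainbow_free S.
Proof. by case/ecpg_umbrella_free=> f /umbrella_free_rainbow_free. Qed.

Lemma monochromatic_triangles_ecpg S : 0 < #|S| ->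
  {in S & &, forall u v w, u != v -> v != w -> u != w -> col u w = col u v} ->
  ecpg col S.
Proof.
move=> S_gt0 mono_S; apply: (@umbrella_free_ecpg S (fun x => enum_rank x)) => //.
split=> [x y _ _ /val_inj/enum_rank_inj //|u v w uS vS wS lt_uv lt_vw]; left.
have neq a b : enum_rank a < enum_rank b -> a != b.
  by apply: contraTneq => ->; rewrite ltnn.
by apply: mono_S; rewrite ?neq //; apply: ltn_trans lt_vw.
Qed.

Lemma umbrella_free_two_colors S f i : {in S &, injective f} ->
  {in S &, forall u v, {in S &, forall u' v', u != v -> u' != v' ->
     col u v != i -> col u' v' != i -> col u v = col u' v'}} ->
  {in S & &, forall u v w, f u < f v -> f v < f w ->
     (col u v == i) = (col v w == i) -> (col u w == i) = (col u v == i)} ->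
  umbrella_free S f.
Proof.
move=> f_inj other_col i_trans; split=> // u v w uS vS wS lt_uv lt_vw.
have neq a b : a \in S -> b \in S -> f a < f b -> a != b.
  by move=> _ _; apply: contraTneq => ->; rewrite ltnn.
have nuv := neq _ _ uS vS lt_uv; have nvw := neq _ _ vS wS lt_vw.
have nuw := neq _ _ uS wS (ltn_trans lt_uv lt_vw).
have [cuv|cuv] := eqVneq (col u v) i; have [cvw|cvw] := eqVneq (col v w) i.
- left; have := i_trans u v w uS vS wS lt_uv lt_vw; rewrite cuv cvw eqxx.
  by move=> /(_ erefl)/eqP->.
- have [cuw|cuw] := eqVneq (col u w) i; first by left; rewrite cuw cuv.
  by right; apply: other_col.
- have [cuw|cuw] := eqVneq (col u w) i; first by right; rewrite cuw cvw.
  by left; apply: other_col.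
- left; apply: other_col => //.
  have := i_trans u v w uS vS wS lt_uv lt_vw; rewrite (negbTE cuv) (negbTE cvw).
  by move=> /(_ erefl)/negbT.
Qed.

End UmbrellaFree.

Lemma perm_graph_transitive (X : finType) (S : {set X}) (e : rel X)
    (l : X -> 'I_#|S|) pi : perm_graph_of e l pi ->
  {in S & &, forall u v w, l u < l v -> l v < l w -> e v u = e w v -> e w u = e v u}.
Proof.
move=> pi_l u v w uS vS wS lt_uv lt_vw.
rewrite (pi_l v u) // (pi_l w v) // (pi_l w u) //; last exact: ltn_trans lt_vw.
by case: ltngtP; case: ltngtP; case: ltngtP => //; lia.
Qed.

Section Gallai.
Variables (X : finType) (col : X -> X -> nat).
Hypothesis col_sym : forall u v, col u v = col v u.
Implicit Types (S D E W : {set X}) (i : nat) (x y : X).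

Lemma rainbow_freeS S S' : S' \subset S -> rainbow_free col S -> rainbow_free col S'.
Proof. by move=> /subsetP sS'S S_rf u v w uS vS wS; apply: S_rf; apply: sS'S. Qed.

Lemma rainbow_freeT : ~ rainbow_triangle col <-> rainbow_free col [set: X].
Proof.
split=> [no_rainbow u v w _ _ _ uv vw uw|T_rf [u [v [w [uv vw uw [cuv cvw cuw]]]]]].
  have [|ne1] := eqVneq (col u v) (col v w); first by left.
  have [|ne2] := eqVneq (col v w) (col u w); first by right; left.
  have [|ne3] := eqVneq (col u v) (col u w); first by right; right.
  by case: no_rainbow; exists u, v, w.
have [] := T_rf u v w (in_setT u) (in_setT v) (in_setT w) uv vw uw.
  by move/eqP; rewrite (negbTE cuv).
by case=> /eqP; [rewrite (negbTE cvw) | rewrite (negbTE cuw)].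
Qed.

Definition color_closed S i D := [forall u in D, forall w in S :\: D, col u w != i].

Lemma color_closedP S i D :
  reflect {in D & S, forall u w, w \notin D -> col u w != i} (color_closed S i D).
Proof.
apply: (iffP forall_inP) => [D_cl u w uD wS wD|D_cl u uD].
  by apply: (forall_inP (D_cl u uD)); rewrite inE wD.
by apply/forall_inP=> w /setDP[wS wD]; apply: D_cl.
Qed.

Lemma color_closedI S i D E :
  color_closed S i D -> color_closed S i E -> color_closed S i (D :&: E).
Proof.
move=> /color_closedP D_cl /color_closedP E_cl; apply/color_closedP=> u w.
by case/setIP=> uD uE wS; rewrite inE negb_and => /orP[]; [apply: D_cl | apply: E_cl].
Qed.

Lemma color_closedC S i D : color_closed S i D -> color_closed S i (S :\: D).
Proof.
move=> /color_closedP D_cl; apply/color_closedP=> u w /setDP[uS uD] wS.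
by rewrite inE wS andbT negbK => wD; rewrite col_sym; apply: D_cl.
Qed.

Lemma color_closedT S i : color_closed S i S.
Proof. by apply/color_closedP=> u w _ ->. Qed.

Definition color_component S i x W := [/\ W \subset S, x \in W, color_closed S i W &
  forall D, D \subset S -> color_closed S i D -> x \in D -> W \subset D].

Lemma color_component_exists S i x : x \in S -> exists W, color_component S i x W.
Proof.
move=> xS; pose P D := [&& D \subset S, color_closed S i D & x \in D].
have PS : P S by rewrite /P subxx color_closedT.
case: (arg_minnP (fun D => #|D|) PS) => W /and3P[WS W_cl xW] W_min.
exists W; split=> // D DS D_cl xD.
have /W_min : P (W :&: D).
  by rewrite /P (subset_trans (subsetIl _ _) WS) color_closedI // inE xW.
by move=> le_WD; apply/setIidPl/eqP; rewrite eqEcard subsetIl.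
Qed.

Definition module_in S W :=
  forall z a a', z \in S -> z \notin W -> a \in W -> a' \in W -> col a z = col a' z.

(* All vertices of [W] see an outside vertex [z] in the colour in which [x]
   sees it: the vertices of [W] with that property form an [i]-closed set. *)
Lemma color_component_module S i x W :
  rainbow_free col S -> color_component S i x W -> module_in S W.
Proof.
move=> S_rf [WS xW W_cl W_min] z a a' zS zW aW a'W.
pose D := [set y in W | col y z == col x z].
have DS : D \subset S by apply: subset_trans WS; apply/subsetP=> y /setIdP[].
suff D_cl : color_closed S i D.
  have xD : x \in D by rewrite inE xW eqxx.
  have /subsetP W_D := W_min D DS D_cl xD.
  have /W_D/setIdP[_ /eqP->] := aW.
  by have /W_D/setIdP[_ /eqP->] := a'W.
apply/color_closedP => y w /setIdP[yW /eqP cyz] wS.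
have [wW /=|wW _] := boolP (w \in W); last exact: (color_closedP _ _ _ W_cl).
rewrite inE wW /= => /eqP cwz; apply/eqP=> cyw.
have yS : y \in S by apply: (subsetP WS).
have nyw : y != w by apply/eqP=> eq_yw; apply: cwz; rewrite -eq_yw.
have nyz : y != z by apply: contraNneq zW => <-.
have nwz : w != z by apply: contraNneq zW => <-.
have cyz_i : col y z != i by apply: (color_closedP _ _ _ W_cl).
have cwz_i : col w z != i by apply: (color_closedP _ _ _ W_cl).
case: (S_rf y w z yS wS zS nyw nwz nyz) => [|[|]] E.
- by rewrite -E cyw eqxx in cwz_i.
- by apply: cwz; rewrite E.
- by rewrite -E cyw eqxx in cyz_i.
Qed.

Lemma color_component_proper S i x W D : color_component S i x W ->
  D \subset S -> color_closed S i D -> D != set0 -> D != S -> S :\: W != set0.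
Proof.
move=> [WS xW W_cl W_min] DS D_cl D_ne0 D_neS.
have [xD|xD] := boolP (x \in D).
  have /subsetP W_D := W_min D DS D_cl xD.
  have /properP[_ [y yS yD]] : D \proper S by rewrite properEneq D_neS.
  by apply/set0Pn; exists y; rewrite inE yS andbT; apply: contra yD; apply: W_D.
have /subsetP W_SD : W \subset S :\: D.
  by apply: W_min; rewrite ?subsetDl ?color_closedC // inE xD (subsetP WS).
case/set0Pn: D_ne0 => y yD; apply/set0Pn; exists y.
by rewrite inE (subsetP DS y yD) andbT; apply: contraL yD => /W_SD/setDP[].
Qed.

Definition color_connected S i :=
  forall D, D \subset S -> color_closed S i D -> D = set0 \/ D = S.

Definition three_colors S := exists i j k,
  [/\ color_used col S i, color_used col S j, color_used col S k &
      [/\ i != j, j != k & i != k]].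

Lemma color_usedS S S' i : S' \subset S -> color_used col S' i -> color_used col S i.
Proof. by move=> /subsetP sS'S [u [w [uS wS nuw cuw]]]; exists u, w; split; rewrite ?sS'S. Qed.

Lemma color_connected_neighbor S i x : color_connected S i -> color_used col S i ->
  x \in S -> exists y, [/\ y \in S, y != x & col x y = i].
Proof.
move=> S_conn [u [w [uS wS nuw _]]] xS; apply: NNPP => no_nb.
have x_cl : color_closed S i [set x].
  apply/color_closedP=> a y /set1P-> yS; rewrite in_set1 => nyx; apply/eqP=> cxy.
  by apply: no_nb; exists y.
have xS1 : [set x] \subset S by rewrite sub1set.
have [/setP/(_ x)|S1] := S_conn _ xS1 x_cl; first by rewrite !inE eqxx.
by move: uS wS nuw; rewrite -S1 !inE => /eqP-> /eqP->; rewrite eqxx.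
Qed.

Lemma color_used_setD1 S i v y : color_connected S i -> color_used col S i ->
  y \in S -> y != v -> col v y != i -> color_used col (S :\ v) i.
Proof.
move=> S_conn i_used yS nyv cvy.
have [w [wS nwy cyw]] := color_connected_neighbor S_conn i_used yS.
exists y, w; split=> //; first by rewrite !inE nyv.
  by rewrite !inE wS andbT; apply: contraNneq cvy => wv; rewrite col_sym -wv cyw.
by rewrite eq_sym.
Qed.

Section GallaiStep.
Variables (S D : {set X}) (v : X) (red : nat).
Hypotheses (S_rf : rainbow_free col S) (vS : v \in S) (red_conn : color_connected S red).
Hypotheses (DS : D \subset S :\ v) (D_cl : color_closed (S :\ v) red D).
Hypotheses (D_ne0 : D != set0) (D_neS : D != S :\ v).

Lemma red_neighbor E : E \subset S :\ v -> color_closed (S :\ v) red E -> E != set0 ->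
  exists2 x, x \in E & col v x = red.
Proof.
move=> ES E_cl E_ne0; apply: NNPP => no_nb.
have E_clS : color_closed S red E.
  apply/color_closedP=> a w aE wS wE; apply/eqP=> caw.
  have [wv|nwv] := eqVneq w v; first by apply: no_nb; exists a; rewrite // col_sym -wv.
  by move: caw; apply/eqP; apply: (color_closedP _ _ _ E_cl) => //; rewrite !inE nwv.
have [E0|ES_eq] := red_conn (subset_trans ES (subsetDl _ _)) E_clS.
  by rewrite E0 eqxx in E_ne0.
by move/subsetP: ES => /(_ v); rewrite ES_eq vS !inE eqxx => /(_ isT).
Qed.

Lemma red_neighbor_outside y W : color_component (S :\ v) red y W ->
  exists2 x, x \in (S :\ v) :\: W & col v x = red.
Proof.
move=> W_comp; apply: red_neighbor; first exact: subsetDl.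
  by apply: color_closedC; case: W_comp.
exact: color_component_proper W_comp DS D_cl D_ne0 D_neS.
Qed.

Lemma color_across y W x : y \in S :\ v -> color_closed (S :\ v) red W -> y \in W ->
  x \in (S :\ v) :\: W -> col v x = red -> col v y != red -> col v y = col y x.
Proof.
move=> /setD1P[nyv yS] W_cl yW /setDP[/setD1P[nxv xS] xW] cvx cvy.
have nyx : y != x by apply: contraNneq xW => <-.
have cyx : col y x != red by apply: (color_closedP _ _ _ W_cl) => //; rewrite !inE nxv.
rewrite eq_sym in nyv; rewrite eq_sym in nxv.
case: (S_rf vS yS xS nyv nyx nxv) => [//|[E|E]].
- by rewrite E cvx eqxx in cyx.
- by rewrite E cvx eqxx in cvy.
Qed.

Lemma gallai_step y y' : y \in S :\ v -> y' \in S :\ v ->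
  col v y != red -> col v y' != red -> col v y = col v y'.
Proof.
move=> yS' y'S' cvy cvy'.
have S'_rf : rainbow_free col (S :\ v) := rainbow_freeS (subsetDl _ _) S_rf.
have [W W_comp] := color_component_exists red yS'.
have [W' W'_comp] := color_component_exists red y'S'.
have W_mod := color_component_module S'_rf W_comp.
have W'_mod := color_component_module S'_rf W'_comp.
case: (W_comp) => WS yW W_cl W_min; case: (W'_comp) => W'S y'W' W'_cl W'_min.
have [y'W|y'W] := boolP (y' \in W).
  have [x xW cvx] := red_neighbor_outside W_comp.
  have xW' : x \in (S :\ v) :\: W'.
    case/setDP: xW => xS' xnW; rewrite inE xS' andbT; apply: contra xnW.
    exact/subsetP/W'_min.
  rewrite (color_across yS' W_cl yW xW cvx cvy) (color_across y'S' W'_cl y'W' xW' cvx cvy').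
  by case/setDP: xW => xS' xnW; apply: W_mod.
have /subsetP W'_sub : W' \subset (S :\ v) :\: W.
  by apply: W'_min; rewrite ?subsetDl ?color_closedC // inE y'W.
have W_ne0 : W != set0 by apply/set0Pn; exists y.
have W'_ne0 : W' != set0 by apply/set0Pn; exists y'.
have [x xW cvx] := red_neighbor WS W_cl W_ne0.
have [x' x'W' cvx'] := red_neighbor W'S W'_cl W'_ne0.
have yW' : y \notin W' by apply: contraL yW => /W'_sub/setDP[].
have xW' : x \in (S :\ v) :\: W'.
  by rewrite inE (subsetP WS x xW) andbT; apply: contraL xW => /W'_sub/setDP[].
rewrite (color_across yS' W_cl yW (W'_sub x' x'W') cvx' cvy).
rewrite (color_across y'S' W'_cl y'W' xW' cvx cvy') col_sym.
by rewrite (W'_mod y x' y' yS' yW' x'W' y'W') col_sym (W_mod y' y x y'S' y'W yW xW) col_sym.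
Qed.

End GallaiStep.

(* Gallai's lemma.  Delete a vertex [v]: by induction some colour becomes
   disconnected, and then [gallai_step] leaves [v] with only two colours. *)
Lemma gallai S : rainbow_free col S ->
  (forall i, color_used col S i -> color_connected S i) -> ~ three_colors S.
Proof.
have [n le_Sn] := ubnP #|S|; elim: n => // n IHn in S le_Sn *.
move=> S_rf S_conn [r1 [r2 [r3 [u1 u2 u3 [n12 n23 n13]]]]].
have [v vS] : exists v, v \in S by case: u1 => v [? [vS _ _ _]]; exists v.
have [y1 [y1S y1v c1]] := color_connected_neighbor (S_conn _ u1) u1 vS.
have [y2 [y2S y2v c2]] := color_connected_neighbor (S_conn _ u2) u2 vS.
have [y3 [y3S y3v c3]] := color_connected_neighbor (S_conn _ u3) u3 vS.
have S'_used r : color_used col S r -> color_used col (S :\ v) r.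
  move=> ur; have [y [yS yv cvy]] : exists y, [/\ y \in S, y != v & col v y != r].
    have [->|nr1] := eqVneq r r1; first by exists y2; split; rewrite // c2 eq_sym.
    by exists y1; split; rewrite // c1 eq_sym.
  exact: color_used_setD1 (S_conn _ ur) ur yS yv cvy.
have S'_lt : #|S :\ v| < n by move: le_Sn; rewrite (cardsD1 v S) vS.
have [red red_used red_disconn] :
    exists2 red, color_used col (S :\ v) red & ~ color_connected (S :\ v) red.
  apply: NNPP => all_conn.
  apply: (IHn (S :\ v) S'_lt (rainbow_freeS (subsetDl _ _) S_rf)).
    by move=> i ui; apply: NNPP => nc; apply: all_conn; exists i.
  by exists r1, r2, r3; split; [apply: S'_used..|].
have [D [DS D_cl D_ne0 D_neS]] : exists D,
    [/\ D \subset S :\ v, color_closed (S :\ v) red D, D != set0 & D != S :\ v].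
  apply: NNPP => none; apply: red_disconn => D DS D_cl.
  have [->|D_ne0] := eqVneq D set0; first by left.
  have [->|D_neS] := eqVneq D (S :\ v); first by right.
  by case: none; exists D.
have red_conn := S_conn _ (color_usedS (subsetDl _ _) red_used).
have step := gallai_step S_rf vS red_conn DS D_cl D_ne0 D_neS.
have inS' y : y \in S -> y != v -> y \in S :\ v by move=> yS yv; rewrite !inE yv.
have y1S' := inS' _ y1S y1v; have y2S' := inS' _ y2S y2v; have y3S' := inS' _ y3S y3v.
move: (step _ _ y2S' y3S') (step _ _ y1S' y3S') (step _ _ y1S' y2S').
rewrite c1 c2 c3 => s23 s13 s12.
have [e1|n1] := eqVneq r1 red.
  by move/eqP: n23; apply; apply: s23; rewrite -e1 eq_sym.
have [e2|n2] := eqVneq r2 red.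
  by move/eqP: n13; apply; apply: s13; rewrite // -e2 eq_sym.
by move/eqP: n12; apply; apply: s12.
Qed.

Lemma two_colors S i j k : color_used col S i -> color_used col S j -> i != j ->
  ~ three_colors S -> color_used col S k -> k = i \/ k = j.
Proof.
move=> ui uj nij no3 uk; have [|nki] := eqVneq k i; first by left.
have [|nkj] := eqVneq k j; first by right.
by case: no3; exists i, j, k; split=> //; split; rewrite // eq_sym.
Qed.

Lemma ncolors_two S i j : color_used col S i -> color_used col S j -> i != j ->
  ~ three_colors S -> ncolors col S = 2.
Proof.
move=> ui uj nij no3; rewrite /ncolors.
set s := undup _; have s_uniq : uniq s := undup_uniq _.
have mem_s k : (k \in s) <-> color_used col S k.
  rewrite mem_undup; split.
    case/mapP=> [[u w]]; rewrite mem_filter mem_enum inE /= => /andP[nuw /andP[uS wS]] ->.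
    by exists u, w.
  case=> u [w [uS wS nuw <-]]; apply/mapP; exists (u, w) => //.
  by rewrite mem_filter mem_enum inE /= nuw uS wS.
apply/eqP; rewrite eqn_leq; apply/andP; split.
  apply: (@uniq_leq_size _ s [:: i; j]) => // k k_s.
  have [->|->] := two_colors ui uj nij no3 (iffLR (mem_s k) k_s).
    by rewrite inE eqxx.
  by rewrite !inE eqxx orbT.
apply: (@uniq_leq_size _ [:: i; j] s); first by rewrite /= inE nij.
by move=> k; rewrite !inE => /orP[] /eqP->; apply/mem_s.
Qed.

End Gallai.

Section Modules.
Variables (T : finType) (c : T -> T -> nat).
Hypothesis c_sym : forall u v, c u v = c v u.
Implicit Types (M N P U A B : {set T}) (x y : T).

Lemma moduleP M :
  reflect (forall v u u', v \notin M -> u \in M -> u' \in M -> c u v = c u' v) (module c M).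
Proof.
apply: (iffP forall_inP) => [M_mod v u u' vM uM u'M|M_mod v].
  by move: (M_mod v); rewrite inE => /(_ vM)/forall_inP/(_ u uM)/forall_inP/(_ u' u'M)/eqP.
by rewrite inE => vM; do 2![apply/forall_inP=> ? ?]; apply/eqP; apply: M_mod.
Qed.

Lemma strongP M : reflect [/\ M != set0, module c M &
    forall N, module c N -> [|| M \subset N, N \subset M | [disjoint M & N]]]
  (strong_module c M).
Proof.
apply: (iffP idP) => [/andP[/andP[M0 M_mod] /forallP M_str]|[M0 M_mod M_str]].
  by split=> // N N_mod; apply: (implyP (M_str N)).
by rewrite /strong_module M0 M_mod; apply/forallP=> N; apply/implyP; apply: M_str.
Qed.

Lemma PmaxP M P : reflect [/\ strong_module c P, P \proper M &
    forall N, strong_module c N -> N \proper M -> P \subset N -> N = P]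
  (P \in Pmax c M).
Proof.
rewrite inE; apply: (iffP and3P) => [[P_str P_M /forallP P_max]|[P_str P_M P_max]].
  split=> // N N_str N_M P_N; apply/eqP.
  by apply: (implyP (P_max N)); rewrite N_str N_M.
split=> //; apply/forallP=> N; apply/implyP=> /and3P[N_str N_M P_N].
by rewrite (P_max N).
Qed.

Lemma strong_module_neq0 M : strong_module c M -> M != set0.
Proof. by case/strongP. Qed.

Lemma strong_module_mod M : strong_module c M -> module c M.
Proof. by case/strongP. Qed.

Lemma strong_module_set1 x : strong_module c [set x].
Proof.
apply/strongP; split.
- by apply/set0Pn; exists x; rewrite inE.
- by apply/moduleP=> v u u' _ /set1P-> /set1P->.
- by move=> N _; have [xN|xN] := boolP (x \in N); rewrite ?sub1set ?disjoints1 xN ?orbT.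
Qed.

Lemma strong_module_setT : 0 < #|T| -> strong_module c [set: T].
Proof.
case/card_gt0P=> x _; apply/strongP; split.
- by apply/set0Pn; exists x; rewrite inE.
- by apply/moduleP=> v u u'; rewrite inE.
- by move=> N _; rewrite subsetT orbT.
Qed.

Lemma module_setU A B : module c A -> module c B -> ~~ [disjoint A & B] ->
  module c (A :|: B).
Proof.
move=> /moduleP A_mod /moduleP B_mod /pred0Pn[y /andP[yA yB]].
apply/moduleP=> v u u'; rewrite !inE negb_or => /andP[vA vB].
have to_y w : (w \in A) || (w \in B) -> c w v = c y v.
  by case/orP=> wAB; [apply: A_mod | apply: B_mod].
by move=> /to_y-> /to_y->.
Qed.

Lemma Pmax_sub M P : P \in Pmax c M -> P \subset M.
Proof. by case/PmaxP=> _ /properP[]. Qed.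

Lemma Pmax_disjoint M P P' : P \in Pmax c M -> P' \in Pmax c M -> P != P' ->
  [disjoint P & P'].
Proof.
case/PmaxP=> P_str P_M P_max /PmaxP[P'_str P'_M P'_max] nPP'.
case/strongP: (P_str) => _ _ /(_ P' (strong_module_mod P'_str)) /or3P[PP'|P'P|//].
  by rewrite (P_max P' P'_str P'_M PP') eqxx in nPP'.
by rewrite (P'_max P P_str P_M P'P) eqxx in nPP'.
Qed.

Lemma Pmax_cover M x : 1 < #|M| -> x \in M -> exists2 P, P \in Pmax c M & x \in P.
Proof.
move=> M_gt1 xM; pose Q N := [&& strong_module c N, N \proper M & x \in N].
have Q1 : Q [set x].
  by rewrite /Q strong_module_set1 set11 properEcard sub1set xM cards1 M_gt1.
case: (arg_maxnP (fun N => #|N|) Q1) => P /and3P[P_str P_M xP] P_max.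
exists P => //; apply/PmaxP; split=> // N N_str N_M P_N.
apply/eqP; rewrite eq_sym eqEcard P_N /=; apply: P_max.
by rewrite /Q N_str N_M (subsetP P_N).
Qed.

Lemma Pmax_card_gt1 M : 1 < #|M| -> 1 < #|Pmax c M|.
Proof.
move=> M_gt1; have [x xM] : exists x, x \in M by apply/card_gt0P; apply: ltnW.
have [P P_M xP] := Pmax_cover M_gt1 xM.
have [_ /properP[_ [y yM yP]] _] := PmaxP _ _ P_M.
have [P' P'_M yP'] := Pmax_cover M_gt1 yM.
by apply/card_gt1P; exists P, P'; split=> //; apply: contraNneq yP => ->.
Qed.

Lemma qcol_sym A B : qcol c A B = qcol c B A.
Proof. by rewrite /qcol; case: [pick x in A] => [a|]; case: [pick x in B]. Qed.

Lemma qcol_module A B a b : module c A -> module c B -> [disjoint A & B] ->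
  a \in A -> b \in B -> qcol c A B = c a b.
Proof.
move=> /moduleP A_mod /moduleP B_mod AB aA bB; rewrite /qcol.
case: pickP => [a' a'A|/(_ a)]; last by rewrite aA.
case: pickP => [b' b'B|/(_ b)]; last by rewrite bB.
have b'A : b' \notin A by rewrite disjoint_sym in AB; rewrite (disjointFr AB b'B).
have aB : a \notin B by rewrite (disjointFr AB aA).
by rewrite (A_mod b' a' a) // c_sym (B_mod a b' b) // c_sym.
Qed.

Lemma qcol_Pmax M A B a b : A \in Pmax c M -> B \in Pmax c M -> A != B ->
  a \in A -> b \in B -> qcol c A B = c a b.
Proof.
move=> AQ BQ nAB; have /PmaxP[A_str _ _] := AQ; have /PmaxP[B_str _ _] := BQ.
apply: qcol_module; [exact: strong_module_mod A_str | exact: strong_module_mod B_str|].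
exact: Pmax_disjoint AQ BQ nAB.
Qed.

Lemma qverts_strong M A : strong_module c M -> A \in qverts c M ->
  strong_module c A /\ A \subset M.
Proof.
rewrite /qverts; case: eqP => _ M_str; first by move/set1P->.
by case/PmaxP=> A_str /properP[].
Qed.

Lemma qverts_mem M A a : strong_module c M -> A \in qverts c M -> a \in A -> a \in M.
Proof. by move=> M_str /(qverts_strong M_str)[_ /subsetP]; apply. Qed.

Lemma qverts_disjoint M A B : A \in qverts c M -> B \in qverts c M -> A != B ->
  [disjoint A & B].
Proof.
rewrite /qverts; case: eqP => _; last exact: Pmax_disjoint.
by move=> /set1P-> /set1P->; rewrite eqxx.
Qed.

Lemma qverts_gt0 M : strong_module c M -> 0 < #|qverts c M|.
Proof.
rewrite /qverts; case: eqP => [_ _|/eqP M_n1 M_str]; first by rewrite cards1.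
have M_gt1 : 1 < #|M| by rewrite ltn_neqAle eq_sym M_n1 card_gt0 strong_module_neq0.
by apply: ltnW; apply: Pmax_card_gt1.
Qed.

Lemma qcol_qverts M A B a b : strong_module c M -> A \in qverts c M -> B \in qverts c M ->
  A != B -> a \in A -> b \in B -> qcol c A B = c a b.
Proof.
move=> M_str AQ BQ nAB aA bB; apply: qcol_module aA bB.
- exact: strong_module_mod (qverts_strong M_str AQ).1.
- exact: strong_module_mod (qverts_strong M_str BQ).1.
- exact: qverts_disjoint AQ BQ nAB.
Qed.

Lemma qverts_neq M A B a b : A \in qverts c M -> B \in qverts c M -> A != B ->
  a \in A -> b \in B -> a != b.
Proof.
move=> AQ BQ nAB aA; apply: contraTneq => <-.
by rewrite (disjointFr (qverts_disjoint AQ BQ nAB) aA).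
Qed.

Definition qlift (f : T -> nat) A := if [pick x in A] is Some a then f a else 0.

Lemma qlift_rep M f A : strong_module c M -> A \in qverts c M ->
  exists2 a, a \in A & qlift f A = f a.
Proof.
move=> M_str AQ; have /set0Pn[a aA] := strong_module_neq0 (qverts_strong M_str AQ).1.
by rewrite /qlift; case: pickP => [a' a'A|/(_ a)]; [exists a' | rewrite aA].
Qed.

Lemma qlift_inj M f : strong_module c M -> {in M &, injective f} ->
  {in qverts c M &, injective (qlift f)}.
Proof.
move=> M_str f_inj A B AQ BQ; have [a aA ->] := qlift_rep f M_str AQ.
have [b bB ->] := qlift_rep f M_str BQ; move=> fab; apply/eqP; apply: contraT => nAB.
have := qverts_neq AQ BQ nAB aA bB.
by rewrite (f_inj a b (qverts_mem M_str AQ aA) (qverts_mem M_str BQ bB) fab) eqxx.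
Qed.

Lemma umbrella_free_quotient M f : strong_module c M -> umbrella_free c M f ->
  umbrella_free (qcol c) (qverts c M) (qlift f).
Proof.
move=> M_str [f_inj f_umb].
have neq A B : qlift f A < qlift f B -> A != B by apply: contraTneq => ->; rewrite ltnn.
split=> [|A B C AQ BQ CQ]; first exact: qlift_inj.
have [a aA fa] := qlift_rep f M_str AQ; have [b bB fb] := qlift_rep f M_str BQ.
have [d dC fd] := qlift_rep f M_str CQ.
move=> lt_AB lt_BC; have lt_AC := ltn_trans lt_AB lt_BC.
rewrite !(qcol_qverts M_str _ _ _ aA bB, qcol_qverts M_str _ _ _ aA dC,
          qcol_qverts M_str _ _ _ bB dC) ?neq //.
apply: f_umb; rewrite -?fa -?fb -?fd //.
- exact: qverts_mem M_str AQ aA.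
- exact: qverts_mem M_str BQ bB.
- exact: qverts_mem M_str CQ dC.
Qed.

Lemma rainbow_free_quotient M : strong_module c M -> rainbow_free c M ->
  rainbow_free (qcol c) (qverts c M).
Proof.
move=> M_str M_rf A B C AQ BQ CQ nAB nBC nAC.
have rep D : D \in qverts c M -> exists2 d, d \in D & d \in M.
  move=> DQ; have /set0Pn[d dD] := strong_module_neq0 (qverts_strong M_str DQ).1.
  by exists d; rewrite ?(qverts_mem M_str DQ dD).
have [a aA aM] := rep A AQ; have [b bB bM] := rep B BQ; have [d dC dM] := rep C CQ.
rewrite !(qcol_qverts M_str _ _ _ aA bB, qcol_qverts M_str _ _ _ aA dC,
          qcol_qverts M_str _ _ _ bB dC) //.
apply: M_rf => //.
- exact: qverts_neq AQ BQ nAB aA bB.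
- exact: qverts_neq BQ CQ nBC bB dC.
- exact: qverts_neq AQ CQ nAC aA dC.
Qed.

End Modules.

Section Primitivity.
Variables (T : finType) (c : T -> T -> nat).
Hypothesis c_sym : forall u v, c u v = c v u.
Implicit Types (M N P U K L A B : {set T}) (d : nat).

Definition boundary_colored M d K := [forall a in K, forall b in M :\: K, c a b == d].

Lemma boundary_coloredP M d K :
  reflect {in K & M, forall a b, b \notin K -> c a b = d} (boundary_colored M d K).
Proof.
apply: (iffP forall_inP) => [K_bc a b aK bM bK|K_bc a aK].
  by apply/eqP; apply: (forall_inP (K_bc a aK)); rewrite inE bK.
by apply/forall_inP=> b /setDP[bM bK]; apply/eqP; apply: K_bc.
Qed.

Lemma boundary_colored_module M d K : module c M -> K \subset M ->
  boundary_colored M d K -> module c K.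
Proof.
move=> /moduleP M_mod /subsetP KM /boundary_coloredP K_bc; apply/moduleP=> v u u' vK uK u'K.
have [vM|vM] := boolP (v \in M); first by rewrite !K_bc.
by apply: M_mod => //; apply: KM.
Qed.

(* A module [N] reaching out of [K] (through [z]) joins [K :&: N] to
   [K :\: N] in the colour in which [K] sees [z]. *)
Lemma boundary_colored_split M d K N z : boundary_colored M d K -> module c N ->
  z \in N -> z \in M -> z \notin K ->
  boundary_colored M d (K :&: N) /\ boundary_colored M d (K :\: N).
Proof.
move=> /boundary_coloredP K_bc /moduleP N_mod zN zM zK.
have cross a b : a \in K :&: N -> b \in K :\: N -> c a b = d.
  by case/setIP=> aK aN /setDP[bK bN]; rewrite (N_mod b a z) // c_sym K_bc.
split; apply/boundary_coloredP=> a b aK' bM bK'.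
  have [bK|bK] := boolP (b \in K); last by apply: K_bc => //; case/setIP: aK'.
  by apply: cross => //; rewrite inE bK andbT; apply: contra bK' => bN; rewrite inE bK.
have [bK|bK] := boolP (b \in K); last by apply: K_bc => //; case/setDP: aK'.
by rewrite c_sym; apply: cross => //; move: bK'; rewrite !inE bK andbT negbK.
Qed.

(* The smallest set between [P] and [M] with uniformly coloured boundary is a
   strong module, hence equal to [P] by maximality. *)
Lemma boundary_colored_Pmax M P K d : strong_module c M -> P \in Pmax c M ->
  K \subset M -> P \subset K -> K != M -> boundary_colored M d K -> boundary_colored M d P.
Proof.
move=> M_str P_M KM PK K_neM K_bc.
pose Q L := [&& L \subset M, P \subset L & boundary_colored M d L].
have QK : Q K by rewrite /Q KM PK.
case: (arg_minnP (fun L => #|L|) QK) => L /and3P[LM PL L_bc] L_min.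
have L_sub L' : L' \subset L -> Q L' -> L \subset L'.
  by move=> L'L /L_min le_LL'; rewrite -(eqP (_ : L' == L)) // eqEcard L'L.
have /PmaxP[P_str _ P_max] := P_M.
suff L_str : strong_module c L.
  rewrite -(P_max L L_str) //; rewrite properEcard LM /=.
  by apply: leq_ltn_trans (L_min K QK) (proper_card _); rewrite properEneq K_neM.
have /strongP[_ M_mod M_strong] := M_str.
apply/strongP; split.
- by apply: contraNneq (strong_module_neq0 P_str) => L0; rewrite -subset0 -L0.
- exact: boundary_colored_module M_mod LM L_bc.
move=> N N_mod; have [LN|LN] := boolP (L \subset N) => //=.
have [NL|/subsetPn[z zN zL]] := boolP (N \subset L) => //=.
have [MN|NM|MN] := or3P (M_strong N N_mod).
- by rewrite (subset_trans LM MN) in LN.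
- have zM := subsetP NM z zN.
  have [LN_bc LDN_bc] := boundary_colored_split L_bc N_mod zN zM zL.
  have /strongP[_ _ P_strong] := P_str.
  have [PN|NP|PN] := or3P (P_strong N N_mod).
  + have QLN : Q (L :&: N) by rewrite /Q (subset_trans (subsetIl _ _) LM) subsetI PL PN.
    by rewrite (subset_trans (L_sub _ (subsetIl _ _) QLN) (subsetIr _ _)) in LN.
  + by rewrite (subsetP (subset_trans NP PL) z zN) in zL.
  + have QLDN : Q (L :\: N).
      by rewrite /Q (subset_trans (subsetDl _ _) LM) subsetD PL PN.
    by have := L_sub _ (subsetDl _ _) QLDN; rewrite subsetD subxx.
- by rewrite disjoint_sym (disjointWr LM) // disjoint_sym.
Qed.

Lemma Pmax_sub_or_disjoint M P U N : P \in Pmax c M -> module c U -> module c N ->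
  U :|: N = M -> ~~ (U \subset N) -> ~~ [disjoint U & N] -> (P \subset U) || [disjoint P & U].
Proof.
move=> /PmaxP[/strongP[_ _ P_strong] P_M _] U_mod N_mod UN_M U_N UN.
case/or3P: (P_strong U U_mod) => [->//|UP|->]; last by rewrite orbT.
case/or3P: (P_strong N N_mod) => [PN|NP|PN].
- by rewrite (subset_trans UP PN) in U_N.
- by move: P_M; rewrite properE -UN_M subUset UP NP andbF.
- by rewrite (disjointWl UP PN) in UN.
Qed.

Lemma uniform_quotient_series M d : strong_module c M -> 1 < #|M| ->
  {in Pmax c M &, forall A B, A != B -> qcol c A B = d} -> series_module c M.
Proof.
move=> M_str M_gt1 unif; rewrite /series_module M_str /qverts gtn_eqF // Pmax_card_gt1 //=.
apply/forall_inP=> A AQ; apply/forall_inP=> B BQ; apply/forall_inP=> A' A'Q.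
by apply/forall_inP=> B' B'Q; apply/implyP=> nAB; apply/implyP=> nA'B'; rewrite !unif.
Qed.

Section Overlap.
Variables (M U N : {set T}) (x0 z0 : T).
Hypotheses (M_str : strong_module c M) (U_mod : module c U) (N_mod : module c N).
Hypotheses (UN_M : U :|: N = M) (UN : ~~ [disjoint U & N]).
Hypotheses (x0U : x0 \in U) (x0N : x0 \notin N) (z0N : z0 \in N) (z0U : z0 \notin U).

Lemma overlap_cross x y : x \in M -> y \in M ->
  (x \in U, x \in N) != (y \in U, y \in N) -> c x y = c x0 z0.
Proof.
have /moduleP U_m := U_mod; have /moduleP N_m := N_mod.
have f1 x' z : x' \in U -> x' \notin N -> z \in N -> z \notin U -> c x' z = c x0 z0.
  by move=> xU xN zN zU; rewrite (U_m z x' x0) // c_sym (N_m x0 z z0) // c_sym.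
have f2 x' y' : x' \in U -> x' \notin N -> y' \in U -> y' \in N -> c x' y' = c x0 z0.
  by move=> xU xN yU yN; rewrite c_sym (N_m x' y' z0) // c_sym f1.
have f3 y' z : y' \in U -> y' \in N -> z \in N -> z \notin U -> c y' z = c x0 z0.
  by move=> yU yN zN zU; rewrite (U_m z y' x0) // f1.
rewrite -UN_M !inE.
case: (boolP (x \in U)) => xU; case: (boolP (x \in N)) => xN;
case: (boolP (y \in U)) => yU; case: (boolP (y \in N)) => yN //= _ _ _;
by [apply: f1 | apply: f2 | apply: f3 | rewrite c_sym; apply: f1
   | rewrite c_sym; apply: f2 | rewrite c_sym; apply: f3].
Qed.

(* Each maximal strong submodule lies in one of the regions [U :&: N],
   [U :\: N], [N :\: U], whose boundaries are uniformly coloured. *)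
Lemma overlap_Pmax_boundary P : P \in Pmax c M -> boundary_colored M (c x0 z0) P.
Proof.
move=> P_M; have /PmaxP[P_str _ _] := P_M.
have /set0Pn[p pP] := strong_module_neq0 P_str.
have same A : (P \subset A) || [disjoint P & A] -> {in P, forall y, (y \in A) = (p \in A)}.
  by case/orP=> [/subsetP PA|PA] y yP; rewrite ?PA ?(disjointFr PA).
have U_N : ~~ (U \subset N) by apply/subsetPn; exists x0.
have N_U : ~~ (N \subset U) by apply/subsetPn; exists z0.
have sameU := same U (Pmax_sub_or_disjoint P_M U_mod N_mod UN_M U_N UN).
have NU_M : N :|: U = M by rewrite setUC.
have NU : ~~ [disjoint N & U] by rewrite disjoint_sym.
have sameN := same N (Pmax_sub_or_disjoint P_M N_mod U_mod NU_M N_U NU).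
pose R := [set y in M | (y \in U, y \in N) == (p \in U, p \in N)].
apply: (@boundary_colored_Pmax M P R) => //.
- by apply/subsetP=> y /setIdP[].
- apply/subsetP=> y yP; rewrite inE (subsetP (Pmax_sub P_M)) //=.
  by rewrite sameU ?sameN.
- apply/negP=> /eqP RM.
  have: x0 \in R by rewrite RM -UN_M inE x0U.
  have: z0 \in R by rewrite RM -UN_M inE z0N orbT.
  by rewrite !inE x0U (negbTE x0N) z0N (negbTE z0U) => /andP[_ /eqP<-] /andP[].
- apply/boundary_coloredP=> a b /setIdP[aM /eqP ra] bM.
  by rewrite inE bM /= => rb; apply: overlap_cross; rewrite // ra eq_sym.
Qed.

End Overlap.

Lemma overlap_series M U N : strong_module c M -> module c U -> module c N ->
  U :|: N = M -> ~~ (U \subset N) -> ~~ (N \subset U) -> ~~ [disjoint U & N] ->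
  series_module c M.
Proof.
move=> M_str U_mod N_mod UN_M U_N N_U UN.
have [x0 x0U x0N] := subsetPn U_N; have [z0 z0N z0U] := subsetPn N_U.
apply: (@uniform_quotient_series M (c x0 z0)) => //.
  apply/card_gt1P; exists x0, z0; rewrite -UN_M !inE x0U z0N orbT.
  by split=> //; apply: contraNneq x0N => ->.
move=> A B AQ BQ nAB; have /PmaxP[A_str _ _] := AQ; have /PmaxP[B_str _ _] := BQ.
have /set0Pn[a aA] := strong_module_neq0 A_str; have /set0Pn[b bB] := strong_module_neq0 B_str.
rewrite (qcol_Pmax c_sym AQ BQ nAB aA bB).
have A_bc := overlap_Pmax_boundary M_str U_mod N_mod UN_M UN x0U x0N z0N z0U AQ.
apply: (boundary_coloredP _ _ _ A_bc) => //; first exact: subsetP (Pmax_sub BQ) b bB.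
by rewrite (disjointFr (Pmax_disjoint BQ AQ _) bB) // eq_sym.
Qed.

Lemma module_bigcup_quotient M (W : {set {set T}}) : strong_module c M -> W \subset Pmax c M ->
  module_in (qcol c) (Pmax c M) W -> module c (\bigcup_(A in W) A).
Proof.
move=> M_str WP W_mod; apply/moduleP=> v u u' vU /bigcupP[A AW uA] /bigcupP[A' A'W u'A'].
have [AM A'M] := (subsetP WP A AW, subsetP WP A' A'W).
have [vM|vM] := boolP (v \in M); last first.
  have /moduleP M_m := strong_module_mod M_str.
  apply: M_m => //; first exact: subsetP (Pmax_sub AM) u uA.
  exact: subsetP (Pmax_sub A'M) u' u'A'.
have M_gt1 : 1 < #|M|.
  have /PmaxP[/strong_module_neq0 A0 /proper_card AM_lt _] := AM.
  by apply: leq_ltn_trans AM_lt; rewrite card_gt0.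
have [P PM vP] := Pmax_cover c M_gt1 vM.
have PW : P \notin W by apply: contra vU => PW; apply/bigcupP; exists P.
have nAP : A != P by apply: contraNneq PW => <-.
have nA'P : A' != P by apply: contraNneq PW => <-.
rewrite -(qcol_Pmax c_sym AM PM nAP uA vP) -(qcol_Pmax c_sym A'M PM nA'P u'A' vP).
exact: W_mod.
Qed.

(* If [W] were proper, a maximal proper module of [M] containing two of its
   parts would not be strong, and a module overlapping it would make [M] series. *)
Lemma prime_quotient_primitive M (W : {set {set T}}) :
  strong_module c M -> ~~ series_module c M -> W \subset Pmax c M ->
  module_in (qcol c) (Pmax c M) W -> 1 < #|W| -> W = Pmax c M.
Proof.
move=> M_str M_nser WP W_mod W_gt1; apply/eqP; rewrite eqEsubset WP /=.
apply/subsetP=> P0 P0M; apply: contraT => P0W; case/negP: M_nser.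
have [A0 [B0 [A0W B0W nAB]]] := card_gt1P W_gt1.
have [A0M B0M] := (subsetP WP _ A0W, subsetP WP _ B0W).
have /PmaxP[_ _ A0_max] := A0M; have /PmaxP[B0_str _ _] := B0M.
have /set0Pn[b0 b0B0] := strong_module_neq0 B0_str.
pose U0 := \bigcup_(A in W) A.
have U0_M : U0 \proper M.
  rewrite properEneq; apply/andP; split; last by apply/bigcupsP=> A /(subsetP WP)/Pmax_sub.
  have /PmaxP[/strong_module_neq0/set0Pn[p pP0] _ _] := P0M.
  apply/eqP=> U0M; have: p \in U0 by rewrite U0M (subsetP (Pmax_sub P0M)).
  case/bigcupP=> A AW pA; have nAP0 : A != P0 by apply: contraNneq P0W => <-.
  by rewrite (disjointFr (Pmax_disjoint (subsetP WP _ AW) P0M nAP0) pA) in pP0.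
pose Q U := [&& module c U, U \proper M, A0 \subset U & B0 \subset U].
have QU0 : Q U0 by rewrite /Q (module_bigcup_quotient M_str WP W_mod) U0_M !bigcup_sup.
case: (arg_maxnP (fun U => #|U|) QU0) => U /and4P[U_mod U_M A0U B0U] U_max.
have U_nstr : ~~ strong_module c U.
  apply/negP=> U_str; have: b0 \in A0 by rewrite -(A0_max U) // (subsetP B0U).
  by rewrite (disjointFr (Pmax_disjoint B0M A0M _) b0B0) // eq_sym.
have [N [N_mod U_N N_U UN]] : exists N,
    [/\ module c N, ~~ (U \subset N), ~~ (N \subset U) & ~~ [disjoint U & N]].
  apply: NNPP => none; case/negP: U_nstr; apply/strongP; split=> // [|N N_mod].
    by apply/set0Pn; exists b0; rewrite (subsetP B0U).
  by apply: contraT; rewrite !negb_or => /and3P[U_N N_U UN]; case: none; exists N.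
have /strongP[_ _ M_strong] := M_str.
have N_M : N \subset M.
  case/or3P: (M_strong N N_mod) => // [MN|MN].
  - by rewrite (subset_trans (proper_sub U_M) MN) in U_N.
  - by rewrite (disjointWl (proper_sub U_M) MN) in UN.
have UN_M : U :|: N = M.
  apply: contraTeq N_U => UN_neM; rewrite negbK.
  have QUN : Q (U :|: N).
    rewrite /Q module_setU // properEneq UN_neM subUset (proper_sub U_M) N_M /=.
    by rewrite !(subset_trans _ (subsetUl U N)).
  have /eqP UNU : U :|: N == U by rewrite eq_sym eqEcard subsetUl; apply: U_max.
  by rewrite -UNU subsetUr.
exact: overlap_series M_str U_mod N_mod UN_M U_N N_U UN.
Qed.

Lemma prime_quotient_two_colors M : prime_module c M -> rainbow_free c M ->
  3 <= #|qverts c M| -> ~ three_colors (qcol c) (qverts c M).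
Proof.
move=> /andP[M_str M_nser] M_rf Q_ge3.
have Q_rf := rainbow_free_quotient c_sym M_str M_rf.
have M_n1 : #|M| != 1 by apply: contraTneq Q_ge3 => M1; rewrite /qverts M1 eqxx cards1.
rewrite /qverts (negbTE M_n1) in Q_rf *.
apply: (gallai (@qcol_sym _ c c_sym) Q_rf) => i [A [B [AQ BQ nAB cAB]]] D DQ D_cl.
have [->|D0] := eqVneq D set0; first by left.
have [->|DQ'] := eqVneq D (Pmax c M); first by right.
have [W W_comp] := color_component_exists (qcol c) i AQ.
have W_mod := color_component_module Q_rf W_comp.
case: (W_comp) => WQ AW W_cl _.
have BW : B \in W.
  by apply: contraT => BW; move/color_closedP: W_cl => /(_ A B AW BQ BW); rewrite cAB eqxx.
have W_gt1 : 1 < #|W| by apply/card_gt1P; exists A, B.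
have := color_component_proper (@qcol_sym _ c c_sym) W_comp DQ D_cl D0 DQ'.
by rewrite (prime_quotient_primitive M_str M_nser WQ W_mod W_gt1) setDv eqxx.
Qed.

End Primitivity.

Lemma ltn_lex N p q a b : a < N -> b < N ->
  (p * N + a < q * N + b) = (p < q) || (p == q) && (a < b).
Proof.
move=> aN bN; case: (ltngtP p q) => [lt_pq|lt_qp|->] /=; last by rewrite ltn_add2l.
  by nia.
by apply/negbTE; rewrite -leqNgt; nia.
Qed.

Lemma eq_lex N p q a b : a < N -> b < N -> p * N + a = q * N + b -> p = q /\ a = b.
Proof.
move=> aN bN eq_pq; have N_gt0 : 0 < N by apply: leq_ltn_trans aN.
have := congr1 (divn^~ N) eq_pq; have := congr1 (modn^~ N) eq_pq.
by rewrite !modnMDl !modn_small // !divnMDl // !divn_small // !addn0.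
Qed.

Section Composition.
Variables (T : finType) (c : T -> T -> nat).
Hypothesis c_sym : forall u v, c u v = c v u.
Implicit Types (M P : {set T}) (x y z : T).

Definition Pmax_part M x := odflt set0 [pick P in Pmax c M | x \in P].

Lemma Pmax_partP M x : 1 < #|M| -> x \in M ->
  Pmax_part M x \in Pmax c M /\ x \in Pmax_part M x.
Proof.
move=> M_gt1 xM; rewrite /Pmax_part; case: pickP => [P /andP[]//|none].
by have [P PM xP] := Pmax_cover c M_gt1 xM; have := none P; rewrite PM xP.
Qed.

Lemma Pmax_partE M P x : 1 < #|M| -> P \in Pmax c M -> x \in P -> Pmax_part M x = P.
Proof.
move=> M_gt1 PM xP; have xM := subsetP (Pmax_sub PM) x xP.
have [pM xp] := Pmax_partP M_gt1 xM; apply/eqP; apply: contraT => neq.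
by rewrite (disjointFr (Pmax_disjoint pM PM neq) xp) in xP.
Qed.

Lemma umbrella_free_compose M g F N : strong_module c M -> 1 < #|M| ->
  umbrella_free (qcol c) (Pmax c M) g ->
  (forall P, P \in Pmax c M -> umbrella_free c P (F P)) ->
  {in M, forall x, F (Pmax_part M x) x < N} ->
  umbrella_free c M (fun x => g (Pmax_part M x) * N + F (Pmax_part M x) x).
Proof.
move=> M_str M_gt1 [g_inj g_umb] F_uf F_lt; set p := Pmax_part M.
have pP x : x \in M -> p x \in Pmax c M /\ x \in p x by apply: Pmax_partP.
split=> [x y xM yM|x y z xM yM zM].
  have [pxM xpx] := pP x xM; have [pyM ypy] := pP y yM.
  case/(eq_lex (F_lt x xM) (F_lt y yM)) => /g_inj-/(_ pxM pyM) pxy.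
  by rewrite -/p -pxy => Fxy; apply: (F_uf _ pxM).1 => //; rewrite pxy.
have [pxM xpx] := pP x xM; have [pyM ypy] := pP y yM; have [pzM zpz] := pP z zM.
rewrite !ltn_lex ?F_lt //.
have outside x' P : x' \in M -> P \in Pmax c M -> p x' != P -> x' \notin P.
  move=> x'M PM; apply: contraNN => x'P; apply/eqP; exact: Pmax_partE.
have P_mod P : P \in Pmax c M -> module c P by case/PmaxP=> /strong_module_mod.
have [exy|nxy] := eqVneq (p x) (p y); have [eyz|nyz] := eqVneq (p y) (p z).
- rewrite -exy in eyz ypy *; rewrite -eyz in zpz *; rewrite ltnn eqxx /= => lt_xy lt_yz.
  exact: (F_uf _ pxM).2 x y z xpx ypy zpz lt_xy lt_yz.
- move=> _ _; right; have /moduleP py_m := P_mod _ pyM.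
  have zpy : z \notin p y by apply: outside; rewrite // eq_sym.
  by apply: py_m; rewrite // -exy.
- move=> _ _; left; have /moduleP py_m := P_mod _ pyM.
  have xpy : x \notin p y by apply: outside.
  by rewrite (c_sym x z) (c_sym x y); apply: py_m; rewrite // eyz.
- have ng A B : A \in Pmax c M -> B \in Pmax c M -> A != B -> (g A == g B) = false.
    by move=> AM BM; apply: contraNF => /eqP/g_inj-/(_ AM BM)->.
  rewrite (ng _ _ pxM pyM nxy) (ng _ _ pyM pzM nyz) !andFb !orbF => lt_xy lt_yz.
  have nxz : p x != p z by apply: contraTneq (ltn_trans lt_xy lt_yz) => ->; rewrite ltnn.
  rewrite -(qcol_Pmax c_sym pxM pzM nxz xpx zpz) -(qcol_Pmax c_sym pxM pyM nxy xpx ypy).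
  by rewrite -(qcol_Pmax c_sym pyM pzM nyz ypy zpz); apply: g_umb.
Qed.

End Composition.

Section Quotients.
Variables (T : finType) (c : T -> T -> nat).
Hypothesis c_sym : forall u v, c u v = c v u.
Implicit Types (M : {set T}).

Lemma quotients_umbrella_free M :
  (forall N, strong_module c N -> ecpg (qcol c) (qverts c N)) ->
  strong_module c M -> exists f, umbrella_free c M f.
Proof.
move=> q_ecpg; have [n le_Mn] := ubnP #|M|; elim: n => // n IHn in M le_Mn *.
move=> M_str; have [M1|M_n1] := eqVneq #|M| 1.
  exists (fun=> 0); split=> [x y xM yM _|u v w _ _ _]; last by rewrite ltnn.
  by have /eqP/cards1P[z M_z] := M1; move: xM yM; rewrite M_z => /set1P-> /set1P->.
have M_gt1 : 1 < #|M| by rewrite ltn_neqAle eq_sym M_n1 card_gt0 (strong_module_neq0 M_str).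
have [g g_uf] : exists g, umbrella_free (qcol c) (Pmax c M) g.
  apply: (ecpg_umbrella_free (qcol_sym c_sym)).
  by move: (q_ecpg M M_str); rewrite /qverts (negbTE M_n1).
have [F F_uf] : exists F, forall P, P \in Pmax c M ->
    umbrella_free c P (F P) /\ {in P, forall x, F P x < #|T|}.
  apply: (@choice _ _ (fun P F => P \in Pmax c M ->
    umbrella_free c P F /\ {in P, forall x, F x < #|T|})) => P.
  have [PM|_] := boolP (P \in Pmax c M); last by exists (fun=> 0).
  have /PmaxP[P_str /proper_card P_lt _] := PM.
  have [f f_uf] := IHn P (leq_trans P_lt (ltnSE le_Mn)) P_str.
  have [h h_uf h_lt] := umbrella_free_bounded f_uf.
  by exists h => _; split=> // x xP; apply: leq_trans (h_lt x xP) (max_card _).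
exists (fun x => g (Pmax_part c M x) * #|T| + F (Pmax_part c M x) x).
apply: umbrella_free_compose => //; first by move=> P /F_uf[].
by move=> x xM; have [pM xp] := Pmax_partP c M_gt1 xM; apply: (F_uf _ pM).2.
Qed.

Lemma quotients_ecpg M : strong_module c M ->
  (forall N, strong_module c N -> ecpg (qcol c) (qverts c N)) -> ecpg c M.
Proof.
move=> M_str q_ecpg; have [f f_uf] := quotients_umbrella_free q_ecpg M_str.
by apply: (umbrella_free_ecpg c_sym _ (f := f)); rewrite // card_gt0 (strong_module_neq0 M_str).
Qed.

Lemma ecpg_quotient M : strong_module c M -> ecpg c M -> ecpg (qcol c) (qverts c M).
Proof.
move=> M_str /(ecpg_umbrella_free c_sym)[f f_uf].
apply: (umbrella_free_ecpg (qcol_sym c_sym) (qverts_gt0 M_str) (f := qlift f)).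
exact: umbrella_free_quotient.
Qed.

Lemma series_quotient_ecpg M : series_module c M -> ecpg (qcol c) (qverts c M).
Proof.
case/andP=> /andP[M_str _] /forall_inP Q_mono.
apply: (monochromatic_triangles_ecpg (qcol_sym c_sym) (qverts_gt0 M_str)).
move=> A B C AQ BQ CQ nAB _ nAC.
move: (Q_mono A AQ) => /forall_inP/(_ C CQ)/forall_inP/(_ A AQ)/forall_inP/(_ B BQ).
by rewrite nAC nAB => /eqP.
Qed.

Lemma prime_quotients_ecpg :
  (forall M, prime_module c M -> ecpg (qcol c) (qverts c M)) ->
  forall M, strong_module c M -> ecpg (qcol c) (qverts c M).
Proof.
move=> prime_ecpg M M_str; have [M_ser|M_nser] := boolP (series_module c M).
  exact: series_quotient_ecpg.
by apply: prime_ecpg; rewrite /prime_module M_str.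
Qed.

Lemma nonseries_two_colors M : strong_module c M -> ~~ series_module c M ->
  1 < #|qverts c M| -> exists i j,
  [/\ color_used (qcol c) (qverts c M) i, color_used (qcol c) (qverts c M) j & i != j].
Proof.
move=> M_str M_nser Q_gt1; move: M_nser; rewrite /series_module M_str Q_gt1 /=.
case/forall_inPn=> A AQ /forall_inPn[B BQ /forall_inPn[A' A'Q /forall_inPn[B' B'Q]]].
rewrite !negb_imply => /and3P[nAB nA'B' ne].
by exists (qcol c A B), (qcol c A' B'); split=> //; [exists A, B | exists A', B'].
Qed.

Lemma prime_quotient_ncolors M : prime_module c M -> rainbow_free c M ->
  3 <= #|qverts c M| -> ncolors (qcol c) (qverts c M) = 2.
Proof.
move=> M_prime M_rf Q_ge3; have /andP[M_str M_nser] := M_prime.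
have [i [j [ui uj nij]]] := nonseries_two_colors M_str M_nser (ltnW Q_ge3).
exact: ncolors_two ui uj nij (prime_quotient_two_colors c_sym M_prime M_rf Q_ge3).
Qed.

(* A prime quotient is two-coloured, so the permutation graph of one of its
   colours, read off at representatives, already orders it umbrella-free. *)
Lemma prime_quotient_ecpg M : prime_module c M -> rainbow_free c M ->
  (forall i, color_used c [set: T] i -> simple_perm_graph [set: T] (mono c i)) ->
  ecpg (qcol c) (qverts c M).
Proof.
move=> M_prime M_rf perm_gr; have /andP[M_str M_nser] := M_prime.
have q_sym := qcol_sym c_sym; have Q_gt0 := qverts_gt0 M_str.
have [Q_lt3|Q_ge3] := ltnP #|qverts c M| 3.
  apply: monochromatic_triangles_ecpg => // A B C AQ BQ CQ nAB nBC nAC.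
  move: Q_lt3; rewrite ltnNge => /negP[]; apply/card_gt2P.
  by exists A, B, C; split; split; rewrite // eq_sym.
have no3 := prime_quotient_two_colors c_sym M_prime M_rf Q_ge3.
have [i [j [ui uj nij]]] := nonseries_two_colors M_str M_nser (ltnW Q_ge3).
have [l [l_inj [pi l_pi]]] : simple_perm_graph [set: T] (mono c i).
  apply: perm_gr; have [A [B [AQ BQ nAB <-]]] := ui.
  have /set0Pn[a aA] := strong_module_neq0 (qverts_strong M_str AQ).1.
  have /set0Pn[b bB] := strong_module_neq0 (qverts_strong M_str BQ).1.
  exists a, b; rewrite !inE (qverts_neq AQ BQ nAB aA bB).
  by rewrite (qcol_qverts c_sym M_str AQ BQ nAB aA bB).
apply: (umbrella_free_ecpg q_sym Q_gt0 (f := qlift (fun x => val (l x)))).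
apply: (umbrella_free_two_colors (i := i)).
- by apply: qlift_inj => // x y xM yM /val_inj; apply: l_inj; rewrite inE.
- move=> A B AQ BQ A' B' A'Q B'Q nAB nA'B' ciAB ciA'B'.
  have other k : color_used (qcol c) (qverts c M) k -> k != i -> k = j.
    by move=> uk; case: (two_colors ui uj nij no3 uk) => -> //; rewrite eqxx.
  have uAB : color_used (qcol c) (qverts c M) (qcol c A B) by exists A, B.
  have uA'B' : color_used (qcol c) (qverts c M) (qcol c A' B') by exists A', B'.
  by rewrite (other _ uAB ciAB) (other _ uA'B' ciA'B').
move=> X Y Z XQ YQ ZQ lt_XY lt_YZ; set f := qlift _ in lt_XY lt_YZ.
have neq D E : f D < f E -> D != E by apply: contraTneq => ->; rewrite ltnn.
have nXY := neq _ _ lt_XY; have nYZ := neq _ _ lt_YZ.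
have nXZ := neq _ _ (ltn_trans lt_XY lt_YZ).
have [x xX fx] := qlift_rep (fun x => val (l x)) M_str XQ.
have [y yY fy] := qlift_rep (fun x => val (l x)) M_str YQ.
have [z zZ fz] := qlift_rep (fun x => val (l x)) M_str ZQ.
rewrite /f fx fy in lt_XY; rewrite /f fy fz in lt_YZ.
rewrite (qcol_qverts c_sym M_str XQ YQ nXY xX yY) (qcol_qverts c_sym M_str YQ ZQ nYZ yY zZ).
rewrite (qcol_qverts c_sym M_str XQ ZQ nXZ xX zZ).
have mono_E u v : u != v -> mono c i v u = (c u v == i).
  by move=> nuv; rewrite /mono eq_sym nuv c_sym.
move: (perm_graph_transitive l_pi (in_setT x) (in_setT y) (in_setT z) lt_XY lt_YZ).
rewrite (mono_E x y (qverts_neq XQ YQ nXY xX yY)) (mono_E y z (qverts_neq YQ ZQ nYZ yY zZ)).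
by rewrite (mono_E x z (qverts_neq XQ ZQ nXZ xX zZ)).
Qed.

Lemma no_rainbow_prime_quotients :
  (forall i, color_used c [set: T] i -> simple_perm_graph [set: T] (mono c i)) /\
    ~ rainbow_triangle c ->
  forall M, prime_module c M -> ecpg (qcol c) (qverts c M) /\
    (3 <= #|qverts c M| -> ncolors (qcol c) (qverts c M) = 2).
Proof.
case=> perm_gr /(rainbow_freeT c) T_rf M M_prime.
have M_rf := rainbow_freeS (subsetT M) T_rf.
by split; [apply: prime_quotient_ecpg | apply: prime_quotient_ncolors].
Qed.

End Quotients.

Theorem theorem4p1 (T : finType) (c : T -> T -> nat)
  (c_sym : forall u v, c u v = c v u) (T_nonempty : 0 < #|T|) :
  let i_ := ecpg c [set: T] in
  let ii_ := forall S : {set T}, S != set0 -> ecpg c S in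
  let iii_ := forall M : {set T}, strong_module c M ->
                ecpg (qcol c) (qverts c M) in
  let iv_ := forall M : {set T}, prime_module c M ->
                ecpg (qcol c) (qverts c M) /\
                (3 <= #|qverts c M| -> ncolors (qcol c) (qverts c M) = 2) in
  let v_ := (forall i, color_used c [set: T] i ->
                simple_perm_graph [set: T] (mono c i)) /\ ~ rainbow_triangle c in
  [/\ i_ <-> ii_, i_ <-> iii_, i_ <-> iv_ & i_ <-> v_].
Proof.
cbv zeta.
have T_str := strong_module_setT c T_nonempty.
have iii_i := quotients_ecpg c_sym T_str.
have iv_iii := prime_quotients_ecpg c_sym.
have v_iv := no_rainbow_prime_quotients c_sym.
have i_v (i_holds : ecpg c [set: T]) :
    (forall i, color_used c [set: T] i -> simple_perm_graph [set: T] (mono c i)) /\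
    ~ rainbow_triangle c.
  split=> [i|]; first exact: ecpg_simple_perm_graph.
  by apply/(rainbow_freeT c); apply: ecpg_rainbow_free c_sym _ i_holds.
split; split.
- by move=> i_holds S S_ne0; apply: ecpgS i_holds; rewrite ?subsetT ?card_gt0.
- by apply; rewrite -card_gt0 cardsT.
- move=> i_holds M M_str; apply: ecpg_quotient => //.
  by apply: ecpgS i_holds; rewrite ?subsetT ?card_gt0 ?(strong_module_neq0 M_str).
- exact: iii_i.
- by move/i_v/v_iv.
- by move=> iv_holds; apply: iii_i; apply: iv_iii => M /iv_holds[].
- exact: i_v.
- by move/v_iv=> iv_holds; apply: iii_i; apply: iv_iii => M /iv_holds[].
Qed.
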